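(* Let $\mathbf{r}=(r_0,r_1,r_2,\ldots)$ be the regular paperfolding sequence. For every positive integer $k$, the $t$-Hankel determinant $H_k(\mathbf{r},t)$ is a polynomial in $t$ of degree less than or equal to $3$.
   Context: The regular paperfolding sequence $\mathbf{r}$ is defined by the generating function $\sum_{n\ge0}r_nx^n=\sum_{n\ge0}\frac{x^{2^n-1}}{1-x^{2^{n+2}}}$, so $\mathbf{r}=(1,1,0,1,1,0,0,\ldots)$. For a sequence $\mathbf{c}=(c_0,c_1,\ldots)$, a parameter $t$ and $k\ge1$, the $t$-Hankel determinant is $H_k(\mathbf{c},t)=\det(a_{ij})_{0\le i,j\le k-1}$ where $a_{ij}=c_{i+j}$ for $i\ne j$ and $a_{ii}=c_{2i}\,t$ (i.e. the ordinary Hankel determinant with every diagonal entry multiplied by $t$). *)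

From HB Require Import structures.
From mathcomp Require Import all_boot all_order all_algebra.
Set Implicit Arguments. Unset Strict Implicit. Unset Printing Implicit Defensive.
Import GRing.Theory.
Local Open Scope ring_scope.

(* Regular paperfolding sequence: r_m is the coefficient of x^m in
   sum_{n>=0} x^(2^n - 1) / (1 - x^(2^(n+2)))
     = sum_{n>=0} sum_{j>=0} x^(2^n - 1 + j * 2^(n+2)).
   Only terms with n <= m and j <= m can contribute to x^m, so the
   coefficient is the (finite) number of pairs (n, j) with
   2^n - 1 + j * 2^(n+2) = m. *)
Definition paperfold (m : nat) : nat :=
  (\sum_(n < m.+1) \sum_(j < m.+1) ((2 ^ n - 1 + j * 2 ^ n.+2)%N == m))%N.

Definition tHankel_mx (c : nat -> nat) (k : nat) : 'M[{poly int}]_k :=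
  \matrix_(i < k, j < k)
    (if i == j then (c (i + j)%N)%:R * 'X else (c (i + j)%N)%:R).

Definition tHankel (c : nat -> nat) (k : nat) : {poly int} :=
  \det (tHankel_mx c k).

From mathcomp Require Import all_boot all_order all_algebra perm zify.
Set Implicit Arguments. Unset Strict Implicit. Unset Printing Implicit Defensive.
Import GRing.Theory.

(* The even-indexed terms are r_(2m) = [m even], so t only occurs in the even
   rows of the t-Hankel matrix H, and r_(n + 4) = r_n for even n.  Subtracting
   column j - 4 from each odd column j > 4, a unimodular operation, therefore
   makes these columns constant and zero in the odd rows.  A nonzero term of
   the Leibniz expansion must then send them to even rows, so its degree is at
   most #(even rows) - #(odd columns > 4) <= 3. *)

Lemma count_iotaS (P : pred nat) k : count P (iota 0 k.+1) = count P (iota 0 k) + P k.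
Proof. by rewrite -addn1 iotaD count_cat /= addn0. Qed.

Lemma count_even_iota k : count (fun i => ~~ odd i) (iota 0 k) = uphalf k.
Proof.
elim: k => // k IH; rewrite count_iotaS IH.
have := odd_double_half k; have := odd_double_half k.+1; rewrite !uphalf_half /=.
by case: (odd k) => /=; lia.
Qed.

Lemma count_odd_gt4_iota k : count (fun i => odd i && (4 < i)) (iota 0 k) = (k - 4)./2.
Proof.
elim: k => // k IH; rewrite count_iotaS IH.
have [k_gt4|k_le4] := ltnP 4 k.
  rewrite andbT (_ : k.+1 - 4 = (k - 4).+1) /=; last by lia.
  by rewrite uphalf_half oddB ?(ltnW k_gt4) // addnC addbF.
rewrite andbF addn0 (_ : k - 4 = 0); last by lia.
have : k.+1 - 4 <= 1 by lia.
by case: (k.+1 - 4) => [|[|]].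
Qed.

Lemma card_ord_count k (P : pred nat) : #|[set i : 'I_k | P i]| = count P (iota 0 k).
Proof. by rewrite cardsE cardE size_filter -enumT -val_enum_ord count_map. Qed.

Lemma card_even_leq_odd_gt4 k :
  #|[set i : 'I_k | ~~ odd i]| <= #|[set j : 'I_k | odd j && (4 < j)]| + 3.
Proof.
rewrite (card_ord_count _ (fun i => ~~ odd i)) count_even_iota.
rewrite (card_ord_count _ (fun j => odd j && (4 < j))) count_odd_gt4_iota uphalf_half.
by have := odd_double_half k; have := odd_double_half (k - 4); lia.
Qed.

Lemma paperfold_double m : paperfold m.*2 = ~~ odd m.
Proof.
rewrite /paperfold big_ord_recl [X in (_ + X)%N]big1 ?addn0 => [|n _]; last first.
  (* for n >= 1 the exponent 2^n - 1 + j 2^(n+2) is odd *)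
  apply: big1 => j _; case: eqP => // /(congr1 odd).
  by rewrite odd_double lift0 oddD oddB ?expn_gt0 // !oddM !oddX /= andbF /=.
have jE (j : nat) : (2 ^ 0 - 1 + j * 2 ^ 2 == m.*2) = ~~ odd m && (j == m./2).
  by have := odd_double_half m; case: (odd m) => /= m_eq; apply/eqP/eqP; lia.
under eq_bigr do rewrite jE.
have [m_odd|m_even] := boolP (odd m); first by rewrite big1.
have half_lt : m./2 < m.*2.+1 by rewrite ltnS -{2}(odd_double_half m) -addnn; lia.
rewrite (bigD1 (Ordinal half_lt)) //= eqxx big1 // => j /eqP j_neq.
by case: eqP => // j_eq; case: j_neq; apply: val_inj.
Qed.

Lemma paperfold_add4 n : ~~ odd n -> paperfold (n + 4) = paperfold n.
Proof.
move=> n_even; rewrite -[n]odd_double_half (negbTE n_even) add0n.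
by rewrite -[4]/(2.*2) -doubleD !paperfold_double oddD addbF.
Qed.

Local Open Scope ring_scope.

Lemma size_det_leq (R : comNzRingType) n (A : 'M[{poly R}]_n) (T Z : {set 'I_n}) :
  (forall i j, (size (A i j) <= ((i \in T) && (j \notin Z)).+1)%N) ->
  (forall i j, j \in Z -> i \notin T -> A i j = 0) ->
  (size (\det A) <= (#|T| - #|Z|).+1)%N.
Proof.
move=> sizeA A0; apply: leq_trans (size_sum _ _ _) _.
apply/bigmax_leqP => s _; rewrite size_Msign.
case: (boolP [exists i, (s i \in Z) && (i \notin T)]) =>
    [/existsP[i /andP[sZi nTi]]|/existsPn Zs_sub_T].
  by rewrite (bigD1 i) //= A0 // mul0r size_poly0.
set w := fun i => ((i \in T) && (s i \notin Z) : nat).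
have size_prod : (size (\prod_i A i (s i))%R <= (\sum_i w i).+1)%N.
  apply: leq_trans (size_poly_prod_leq _ _) _.
  rewrite leq_subLR -sum1_card addnS ltnS -big_split /=.
  by apply: leq_sum => i _; rewrite add1n; apply: sizeA.
apply: leq_trans size_prod _; rewrite ltnS.
have -> : \sum_i w i = #|T :\: s @^-1: Z|.
  rewrite -sum1_card [RHS]big_mkcond /=; apply: eq_bigr => i _.
  by rewrite /w !inE andbC; case: (_ && _).
have sZ_sub_T : s @^-1: Z \subset T.
  by apply/subsetP => i; rewrite inE => sZi; have := Zs_sub_T i; rewrite sZi negbK.
by rewrite cardsD (setIidPr sZ_sub_T) card_preimset //; apply: perm_inj.
Qed.

(* Right multiplication by [shift_oddcol_mx] subtracts column [j - 4] from every
   odd column [j > 4]. *)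
Definition shift_oddcol_mx (R : pzRingType) k : 'M[R]_k :=
  1%:M - \matrix_(a, b) (odd b && (a + 4 == b)%N)%:R.

Lemma det_shift_oddcol_mx (R : comPzRingType) k : \det (shift_oddcol_mx R k) = 1.
Proof.
rewrite -det_tr det_trig; last first.
  apply/is_trig_mxP => a b a_lt_b; rewrite !mxE -val_eqE /=.
  by rewrite (gtn_eqF a_lt_b) (@gtn_eqF a (b + 4)) ?andbF ?subrr ?ltn_addr.
rewrite big1 // => a _; rewrite !mxE eqxx.
by rewrite -[X in (_ == X)%N]addn0 eqn_add2l andbF subr0.
Qed.

Section ShiftOddColumns.
Variables (R : pzRingType) (k : nat) (A : 'M[R]_k).

Lemma mulmx_shift_oddcol (i j l : 'I_k) :
  (l + 4 = j)%N -> odd j -> (A *m shift_oddcol_mx R k) i j = A i j - A i l.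
Proof.
move=> lj odd_j; rewrite mulmxBr mulmx1 !mxE (bigD1 l) //= mxE odd_j lj eqxx mulr1.
rewrite big1 ?addr0 // => l' l'_neq; rewrite mxE odd_j.
suff -> : (l' + 4 == j)%N = false by rewrite mulr0.
by apply/eqP => l'j; case/eqP: l'_neq; apply: ord_inj; lia.
Qed.

Lemma mulmx_shift_oddcol_id (i j : 'I_k) :
  ~~ (odd j && (4 < j)%N) -> (A *m shift_oddcol_mx R k) i j = A i j.
Proof.
move=> j_fixed; rewrite mulmxBr mulmx1 !mxE big1 ?subr0 // => l _; rewrite mxE.
case: eqP => [lj|_]; last by rewrite andbF mulr0.
suff -> : odd j = false by rewrite mulr0.
apply: contraNF j_fixed => odd_j; rewrite odd_j /=.
have : j != 4 :> nat by apply: contraTneq odd_j => ->.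
lia.
Qed.

End ShiftOddColumns.

Lemma size_tHankel_mx (c : nat -> nat) k (i j : 'I_k) :
  (size (tHankel_mx c k i j) <= 2)%N.
Proof.
rewrite mxE -polyC_natr; case: eqP => _; last by rewrite (leq_trans (size_polyC_leq1 _)).
by rewrite mul_polyC (leq_trans (size_scale_leq _ _)) // size_polyX.
Qed.

Lemma tHankel_mx_paperfold_const k (i j : 'I_k) :
  odd i || odd j -> tHankel_mx paperfold k i j = (paperfold (i + j))%:R.
Proof.
rewrite mxE; case: eqP => // ->; rewrite orbb addnn paperfold_double => ->.
by rewrite mul0r.
Qed.

Section ShiftedPaperfoldHankel.
Variable k : nat.
Local Notation B := (tHankel_mx paperfold k *m shift_oddcol_mx _ k).

Lemma shifted_tHankel_oddcol (i j : 'I_k) : odd j -> (4 < j)%N ->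
  exists l : 'I_k, (l + 4 = j)%N /\ B i j = (paperfold (i + j))%:R - (paperfold (i + l))%:R.
Proof.
move=> odd_j j_gt4; have l_lt : (j - 4 < k)%N by rewrite (leq_ltn_trans (leq_subr _ _)).
set l := Ordinal l_lt; have lj : (l + 4 = j)%N by rewrite subnK // ltnW.
have odd_l : odd l by rewrite oddB ?(ltnW j_gt4) // odd_j.
exists l; split => //; rewrite (mulmx_shift_oddcol _ _ lj odd_j).
by rewrite !tHankel_mx_paperfold_const ?odd_j ?odd_l ?orbT.
Qed.

Lemma size_shifted_tHankel (i j : 'I_k) :
  (size (B i j) <= ((~~ odd i) && ~~ (odd j && (4 < j)%N)).+1)%N.
Proof.
have [/andP[odd_j j_gt4]|j_fixed] := boolP (odd j && (4 < j)%N).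
  have [l [_ ->]] := shifted_tHankel_oddcol i odd_j j_gt4.
  by rewrite andbF -!polyC_natr -polyCB size_polyC_leq1.
rewrite mulmx_shift_oddcol_id // andbT.
case: (boolP (odd i)) => [odd_i|_]; last exact: size_tHankel_mx.
by rewrite tHankel_mx_paperfold_const ?odd_i // -polyC_natr size_polyC_leq1.
Qed.

Lemma shifted_tHankel_eq0 (i j : 'I_k) : odd i -> odd j -> (4 < j)%N -> B i j = 0.
Proof.
move=> odd_i odd_j j_gt4; have [l [lj ->]] := shifted_tHankel_oddcol i odd_j j_gt4.
move: odd_j; rewrite -lj oddD addbF => odd_l.
by rewrite addnA paperfold_add4 ?subrr // oddD odd_i odd_l.
Qed.

End ShiftedPaperfoldHankel.

Theorem theorem1p4 : forall k : nat, (0 < k)%N ->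
  (size (tHankel paperfold k) <= 4)%N.
Proof.
move=> k _; rewrite /tHankel -[\det _]mulr1 -(det_shift_oddcol_mx _ k) -det_mulmx.
set T := [set i : 'I_k | ~~ odd i]; set Z := [set j : 'I_k | odd j && (4 < j)%N].
apply: leq_trans (size_det_leq (T := T) (Z := Z) _ _) _ => [i j|i j|].
- by rewrite !inE; apply: size_shifted_tHankel.
- by rewrite !inE negbK => /andP[odd_j j_gt4] odd_i; apply: shifted_tHankel_eq0.
- by rewrite ltnS leq_subLR; apply: card_even_leq_odd_gt4.
Qed.
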